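(* Let $f$ be a non-increasing differentiable function with a monotone hazard rate (i.e. $\frac{|f'(x)|}{f(x)}$ is non-decreasing in $x$). Let $x_1<x_2$ be points in its domain such that $f(0)=\sqrt e\,f(x_1)\le e\,f(x_2)$. Then $x_2\le 2x_1$. *)

From Stdlib Require Import Reals.
From Coquelicot Require Import Coquelicot.
Open Scope R_scope.

Definition hazard (f : R -> R) (x : R) : R := Rabs (Derive f x) / f x.

(* With g = ln f we have g' = -hazard f.  The mean value theorem on [0, x1]
   gives 1/2 = g 0 - g x1 = x1 * h(c1), and on [x1, x2] it gives
   (x2 - x1) * h(c2) = g x1 - g x2 <= 1/2, with c1 <= c2.  Monotonicity of the
   hazard rate yields (x2 - x1) * h(c1) <= x1 * h(c1), and h(c1) > 0. *)
From Stdlib Require Import Reals Lra ssreflect.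
From Coquelicot Require Import Coquelicot.
Open Scope R_scope.

Lemma Derive_nonpos_of_nonincreasing (f : R -> R) (c : R) :
  ex_derive f c ->
  (forall x y, c <= x -> x <= y -> f y <= f x) ->
  Derive f c <= 0.
Proof.
  move=> hdiff hnoninc.
  apply Rnot_lt_le => hpos.
  have [del hdel] := proj1 (is_derive_Reals f c _) (Derive_correct f c hdiff) _ hpos.
  have hhalf : 0 < del / 2 by have := cond_pos del; lra.
  have hsmall : Rabs (del / 2) < del by rewrite Rabs_pos_eq; lra.
  have hq := hdel (del / 2) (Rgt_not_eq _ _ (Rlt_gt _ _ hhalf)) hsmall.
  have hquot : (f (c + del / 2) - f c) / (del / 2) <= 0.
  { apply Rmult_le_0_r; last by apply/Rlt_le/Rinv_0_lt_compat.
    have := hnoninc c (c + del / 2) (Rle_refl _) ltac:(lra).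
    lra. }
  have [] := Rabs_def2 _ _ hq; lra.
Qed.

Lemma ln_sqrt (x : R) : 0 < x -> ln (sqrt x) = ln x / 2.
Proof.
  move=> hx.
  have hsx : 0 < sqrt x by apply: sqrt_lt_R0.
  have := ln_mult _ _ hsx hsx; rewrite sqrt_sqrt; lra.
Qed.

Lemma is_derive_ln_comp (f : R -> R) (x : R) :
  0 < f x -> ex_derive f x -> is_derive (fun t => ln (f t)) x (Derive f x / f x).
Proof.
  move=> hpos hdiff.
  rewrite /Rdiv.
  apply: is_derive_comp; first exact: is_derive_ln.
  exact: Derive_correct.
Qed.

Lemma hazard_nonneg (f : R -> R) (x : R) : 0 < f x -> 0 <= hazard f x.
Proof.
  move=> hpos; apply: Rmult_le_pos; first exact: Rabs_pos.
  exact/Rlt_le/Rinv_0_lt_compat.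
Qed.

Lemma hazard_of_nonincreasing (f : R -> R) (x : R) :
  ex_derive f x ->
  (forall s t, x <= s -> s <= t -> f t <= f s) ->
  hazard f x = - (Derive f x / f x).
Proof.
  move=> hdiff hnoninc.
  rewrite /hazard Rabs_left1; last exact: Derive_nonpos_of_nonincreasing.
  rewrite /Rdiv; ring.
Qed.

Lemma ln_decrement_mean_value (f : R -> R) (a b : R) :
  a <= b ->
  (forall x, a <= x <= b -> 0 < f x) ->
  (forall x, a <= x <= b -> ex_derive f x) ->
  (forall x y, a <= x -> x <= y -> f y <= f x) ->
  exists c, a <= c <= b /\ ln (f a) - ln (f b) = (b - a) * hazard f c.
Proof.
  move=> hab hpos hdiff hnoninc.
  have hg x : a <= x <= b ->
      is_derive (fun t => ln (f t)) x (Derive f x / f x).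
    by move=> hx; apply: is_derive_ln_comp; [apply: hpos | apply: hdiff].
  have [c [hc hmvt]] : exists c, Rmin a b <= c <= Rmax a b /\
      ln (f b) - ln (f a) = Derive f c / f c * (b - a).
    apply (MVT_gen (fun t => ln (f t)) a b (fun x => Derive f x / f x)).
  - move=> x; rewrite Rmin_left ?Rmax_right // => hx; apply: hg; lra.
  - move=> x; rewrite Rmin_left ?Rmax_right // => hx.
    apply (continuity_pt_filterlim (fun t => ln (f t))).
    apply: (ex_derive_continuous (K:=R_AbsRing) (V:=R_NormedModule) (fun t => ln (f t))).
    by eexists; apply: hg.
  rewrite Rmin_left ?Rmax_right // in hc.
  exists c; split; first by [].
  rewrite (hazard_of_nonincreasing f c); first lra.
  - by apply: hdiff.
  - by move=> s t hs hst; apply: hnoninc; lra.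
Qed.

Theorem lemma21 (f : R -> R)
  (hpos : forall x, 0 <= x -> 0 < f x)
  (hdiff : forall x, 0 <= x -> ex_derive f x)
  (hnoninc : forall x y, 0 <= x -> x <= y -> f y <= f x)
  (hmhr : forall x y, 0 <= x -> x <= y -> hazard f x <= hazard f y)
  (x1 x2 : R) (hx1 : 0 <= x1) (hx12 : x1 < x2)
  (heq : f 0 = sqrt (exp 1) * f x1)
  (hle : sqrt (exp 1) * f x1 <= exp 1 * f x2) :
  x2 <= 2 * x1.
Proof.
  have hf1 := hpos x1 hx1.
  have hf2 := hpos x2 ltac:(lra).
  have hse : 0 < sqrt (exp 1) by apply/sqrt_lt_R0/exp_pos.
  have lnse : ln (sqrt (exp 1)) = 1 / 2 by rewrite ln_sqrt ?ln_exp; [lra | apply: exp_pos].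
  have drop01 : ln (f 0) - ln (f x1) = 1 / 2 by rewrite heq ln_mult // lnse; lra.
  have drop12 : ln (f x1) - ln (f x2) <= 1 / 2.
  { have := ln_le _ _ (Rmult_lt_0_compat _ _ hse hf1) hle.
    rewrite !ln_mult ?ln_exp ?lnse //; [lra | apply: exp_pos]. }
  have [c1 [hc1 E1]] := ln_decrement_mean_value f 0 x1 hx1
    (fun x hx => hpos x (proj1 hx)) (fun x hx => hdiff x (proj1 hx)) hnoninc.
  have [c2 [hc2 E2]] := ln_decrement_mean_value f x1 x2 (Rlt_le _ _ hx12)
    (fun x hx => hpos x ltac:(lra)) (fun x hx => hdiff x ltac:(lra))
    (fun x y hx => hnoninc x y ltac:(lra)).
  have hmono : hazard f c1 <= hazard f c2 by apply: hmhr; lra.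
  have hh1 : 0 < hazard f c1.
  { have : 0 <= hazard f c1 by apply/hazard_nonneg/hpos; lra.
    nra. }
  have : (x2 - x1) * hazard f c1 <= x1 * hazard f c1.
  { have := Rmult_le_compat_l (x2 - x1) _ _ ltac:(lra) hmono; lra. }
  have := Rmult_le_reg_r _ (x2 - x1) x1 hh1; lra.
Qed.
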